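(* Let $K\ge 2$ and let $r\in[0,1]^K$ satisfy $r(1)>r(2)>\cdots>r(K)$. Fix a sub-optimal arm $j\in\{2,\ldots,K\}$ and a temperature $\eta>0$. For a policy $\pi=\pi_\theta$ write $\varepsilon:=1-\pi(j)$ and $p_a:=\pi(a)$. There exists $\varepsilon_0(\eta)>0$ such that for all $\varepsilon\in(0,\varepsilon_0(\eta))$: if $p_1\ge\varepsilon/K$, then under the Delightful Policy Gradient (DG) flow at temperature $\eta$, \[ \dot\theta(1)-\dot\theta(j)\;\ge\;\frac{\Delta_{1j}}{8K}\,\varepsilon . \]
   Context: $K$-armed bandit: the policy is parameterized by logits $\theta\in\mathbb{R}^K$ via the softmax $\pi_\theta(a)=e^{\theta(a)}/\sum_{a'}e^{\theta(a')}$. The advantage is $U(a):=r(a)-\pi_\theta^\top r$, the surprisal is $\ell(a):=-\log\pi(a)$, and $\Delta_{ab}:=r(a)-r(b)$. With $\sigma(x)=1/(1+e^{-x})$, the DG gate is $w(a):=\sigma(U(a)\ell(a)/\eta)$ and the DG flow is $\dot\theta(a)=\sum_{a'=1}^K w(a')\,\pi(a')\,U(a')\,(\mathbf{1}\{a=a'\}-\pi(a))$. *)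

From mathcomp Require Import all_boot all_order all_algebra.
From mathcomp Require Import all_classical all_reals all_analysis.
Set Implicit Arguments. Unset Strict Implicit. Unset Printing Implicit Defensive.
Import Order.TTheory GRing.Theory Num.Theory.
Local Open Scope ring_scope.

Section DG.
Variables (R : realType) (K : nat).

Definition softmax (theta : 'I_K -> R) (a : 'I_K) : R :=
  expR (theta a) / \sum_(b < K) expR (theta b).

Definition adv (r theta : 'I_K -> R) (a : 'I_K) : R :=
  r a - \sum_(b < K) softmax theta b * r b.

Definition surprisal (theta : 'I_K -> R) (a : 'I_K) : R := - ln (softmax theta a).

Definition sigmoid (x : R) : R := 1 / (1 + expR (- x)).

Definition dg_gate (eta : R) (r theta : 'I_K -> R) (a : 'I_K) : R :=
  sigmoid (adv r theta a * surprisal theta a / eta).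

Definition dg_flow (eta : R) (r theta : 'I_K -> R) (a : 'I_K) : R :=
  \sum_(a' < K) dg_gate eta r theta a' * softmax theta a' * adv r theta a'
                 * ((a == a')%:R - softmax theta a).
End DG.

(* Write G a := w a * pi a * U a, so that thetadot a = G a - pi a * sum_b G b.  Since
   sum_a pi a * U a = 0, the gap thetadot 1 - thetadot j equals G 1 plus a sum over the
   arms a <> j of pi a * U a times a convex combination of the gates w j and w a, in
   which w j carries weight at most 2 eps.  Arm 1 has a nonnegative advantage, so
   w 1 >= 1/2 and G 1 >= (eps / K) (1 - eps) Delta_1j / 2.  Every arm a <> j has
   pi a <= eps, hence surprisal at least log (1 / eps), and sigma z * (- z) <= 1 shows
   that the gate then damps a negative advantage to - U a * w a <= eta / log (1 / eps).
   As these arms carry total mass eps, the remaining sum is at least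
   - eps (2 eps + eta / log (1 / eps)), which is negligible against eps Delta_1j / K
   for small eps. *)

From mathcomp Require Import all_boot all_order all_algebra.
From mathcomp Require Import all_classical all_reals all_analysis.
From mathcomp Require Import ring lra.
Set Implicit Arguments. Unset Strict Implicit. Unset Printing Implicit Defensive.
Import Order.TTheory GRing.Theory Num.Theory.
Local Open Scope ring_scope.

Section Sigmoid.
Variable R : realType.
Implicit Type x : R.

Lemma sigmoid_gt0 x : 0 < sigmoid x.
Proof. by rewrite /sigmoid divr_gt0 // addr_gt0 ?expR_gt0. Qed.

Lemma sigmoid_le1 x : sigmoid x <= 1.
Proof.
by rewrite /sigmoid ler_pdivrMr ?addr_gt0 ?expR_gt0 // mul1r lerDl ltW ?expR_gt0.
Qed.

Lemma sigmoid_ge_half x : 0 <= x -> 1 / 2 <= sigmoid x.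
Proof.
move=> x_ge0; rewrite /sigmoid ler_pdivlMr ?addr_gt0 ?expR_gt0 //.
have : expR (- x) <= 1 by rewrite -expR0 ler_expR lerNl oppr0.
lra.
Qed.

Lemma sigmoid_mulN_le1 x : sigmoid x * - x <= 1.
Proof.
rewrite /sigmoid mul1r ler_pdivrMl ?addr_gt0 ?expR_gt0 // mulr1.
have := expR_ge1Dx (- x); lra.
Qed.

End Sigmoid.

Section Softmax.
Variables (R : realType) (K : nat).
Hypothesis K_gt0 : (0 < K)%N.
Implicit Types (theta r : 'I_K -> R) (a b i j : 'I_K).

Lemma sum_expR_gt0 theta : 0 < \sum_(b < K) expR (theta b).
Proof.
rewrite (bigD1 (Ordinal K_gt0)) //= ltr_pwDl ?expR_gt0 //.
by apply: sumr_ge0 => b _; rewrite ltW ?expR_gt0.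
Qed.

Lemma softmax_gt0 theta a : 0 < softmax theta a.
Proof. by rewrite divr_gt0 ?expR_gt0 ?sum_expR_gt0. Qed.

Lemma sum_softmax theta : \sum_(b < K) softmax theta b = 1.
Proof. by rewrite -mulr_suml divff // gt_eqF ?sum_expR_gt0. Qed.

Lemma sum_softmax_neq theta j :
  \sum_(a < K | a != j) softmax theta a = 1 - softmax theta j.
Proof. by have := sum_softmax theta; rewrite (bigD1 j) //=; lra. Qed.

Lemma softmax_le_sub theta a j :
  a != j -> softmax theta a <= 1 - softmax theta j.
Proof.
move=> a_neq_j; rewrite -sum_softmax_neq (bigD1 a) //= lerDl.
by apply: sumr_ge0 => b _; rewrite ltW ?softmax_gt0.
Qed.

Lemma softmax_le1 theta a : softmax theta a <= 1.
Proof.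
rewrite -(sum_softmax theta) (bigD1 a) //= lerDl.
by apply: sumr_ge0 => b _; rewrite ltW ?softmax_gt0.
Qed.

Lemma surprisal_ge0 theta a : 0 <= surprisal theta a.
Proof. by rewrite oppr_ge0 ln_le0 ?softmax_le1. Qed.

Lemma surprisal_ge theta a (M : R) :
  softmax theta a <= expR (- M) -> M <= surprisal theta a.
Proof.
move=> le_pa; rewrite lerNr -[- M]expRK ler_ln ?posrE ?softmax_gt0 ?expR_gt0 //.
Qed.

Lemma advE r theta i : adv r theta i = \sum_(b < K) softmax theta b * (r i - r b).
Proof.
rewrite /adv; under [RHS]eq_bigr do rewrite mulrBr.
by rewrite sumrB -mulr_suml sum_softmax mul1r.
Qed.

Lemma sum_softmax_adv r theta : \sum_(a < K) softmax theta a * adv r theta a = 0.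
Proof.
rewrite /adv; under eq_bigr do rewrite mulrBr.
by rewrite sumrB -mulr_suml sum_softmax mul1r subrr.
Qed.

Lemma adv_ge_N1 r theta a : (forall b, 0 <= r b <= 1) -> -1 <= adv r theta a.
Proof.
move=> r01; have /andP[ra_ge0 _] := r01 a.
suff : \sum_(b < K) softmax theta b * r b <= 1 by rewrite /adv; lra.
rewrite -(sum_softmax theta); apply: ler_sum => b _.
by have := softmax_gt0 theta b; case/andP: (r01 b); nra.
Qed.

Lemma adv_ge_of_max r theta i j : (forall b, r b <= r i) ->
  softmax theta j * (r i - r j) <= adv r theta i.
Proof.
move=> r_le_ri; rewrite advE (bigD1 j) //= lerDl.
by apply: sumr_ge0 => b _; rewrite mulr_ge0 ?subr_ge0 // ltW ?softmax_gt0.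
Qed.

End Softmax.

Lemma mul_gate_mix_ge (R : realFieldType) (u al be wj wa m A : R) :
  -1 <= u -> 0 <= al <= A -> 0 <= be <= 1 -> 0 <= wj <= 1 -> 0 <= m ->
  - m <= u * wa -> - (A + m) <= u * (al * wj + be * wa).
Proof.
move=> u_ge /andP[al_ge0 al_le] /andP[be_ge0 be_le1] /andP[wj_ge0 wj_le1] m_ge0 uwa_ge.
have alwj_le : al * wj <= A by rewrite (le_trans _ al_le) // ler_piMr.
have : - (al * wj) <= u * (al * wj) by have := mulr_ge0 al_ge0 wj_ge0; nra.
have : - m <= be * (u * wa) by nra.
lra.
Qed.

Section DGFlow.
Variables (R : realType) (K : nat) (eta : R) (r theta : 'I_K -> R).
Hypothesis K_gt0 : (0 < K)%N.
Implicit Types (a b i j : 'I_K).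

Local Notation p := (softmax theta).
Local Notation U := (adv r theta).
Local Notation w := (dg_gate eta r theta).

Definition gated_adv a := w a * p a * U a.

Lemma dg_flowE a : dg_flow eta r theta a = gated_adv a - p a * \sum_(b < K) gated_adv b.
Proof.
rewrite /dg_flow; under eq_bigr => b _ do rewrite mulrBr.
rewrite sumrB (bigD1 a) //= eqxx mulr1 big1 ?addr0; last first.
  by move=> b /negbTE; rewrite eq_sym => ->; rewrite mulr0.
by rewrite mulr_sumr; congr (_ - _); apply: eq_bigr => b _; rewrite mulrC.
Qed.

Lemma dg_flow_subE i j :
  dg_flow eta r theta i - dg_flow eta r theta j =
  gated_adv i + \sum_(a < K | a != j)
      p a * U a * ((1 - p j + p i) * w j + (p j - p i) * w a).
Proof.
set al := 1 - p j + p i; set be := p j - p i.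
have mix : \sum_(a < K) p a * U a * (al * w j + be * w a)
    = be * \sum_(b < K) gated_adv b.
  transitivity (\sum_(a < K) (al * w j * (p a * U a) + be * gated_adv a)).
    by apply: eq_bigr => a _; rewrite /gated_adv; ring.
  by rewrite big_split /= -!mulr_sumr sum_softmax_adv // mulr0 add0r.
rewrite (bigD1 j) //= (_ : p j * U j * _ = gated_adv j) in mix; last first.
  by rewrite /gated_adv /al /be; ring.
have beS : be * \sum_(b < K) gated_adv b
    = p j * \sum_(b < K) gated_adv b - p i * \sum_(b < K) gated_adv b by rewrite mulrBl.
rewrite !dg_flowE; lra.
Qed.

Lemma dg_gate_ge_half a : 0 < eta -> 0 <= U a -> 1 / 2 <= w a.
Proof.
move=> eta_gt0 Ua_ge0; apply: sigmoid_ge_half.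
by rewrite divr_ge0 ?mulr_ge0 ?surprisal_ge0 // ltW.
Qed.

Lemma adv_mul_gate_ge a : 0 < eta -> 0 < surprisal theta a ->
  - (U a * w a) <= eta / surprisal theta a.
Proof.
move=> eta_gt0 l_gt0; rewrite ler_pdivlMr //.
have -> : - (U a * w a) * surprisal theta a
    = eta * (w a * - (U a * surprisal theta a / eta)) by field; rewrite gt_eqF.
by rewrite -[leRHS]mulr1 ler_wpM2l ?(ltW eta_gt0) ?sigmoid_mulN_le1.
Qed.

Lemma adv_mul_gate_ge_concentrated a j (m : R) : 0 < eta -> 0 < m -> a != j ->
  1 - p j <= expR (- (eta / m)) -> - (U a * w a) <= m.
Proof.
move=> eta_gt0 m_gt0 neq_aj p_conc.
have l_ge : eta / m <= surprisal theta a.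
  by rewrite (surprisal_ge K_gt0) // (le_trans (softmax_le_sub K_gt0 theta neq_aj)).
have l_gt0 : 0 < surprisal theta a by rewrite (lt_le_trans _ l_ge) ?divr_gt0.
apply: le_trans (adv_mul_gate_ge eta_gt0 l_gt0) _.
by rewrite ler_pdivrMr // mulrC -ler_pdivrMr.
Qed.

Lemma dg_mix_sum_ge i j (m : R) :
  (forall b, 0 <= r b <= 1) -> i != j -> 1 - p j <= 1 / 2 -> 0 <= m ->
  (forall a, a != j -> - (U a * w a) <= m) ->
  - ((1 - p j) * (2 * (1 - p j) + m)) <=
  \sum_(a < K | a != j) p a * U a * ((1 - p j + p i) * w j + (p j - p i) * w a).
Proof.
move=> r01 neq_ij p_conc m_ge0 Uw_le.
have w01 b : 0 <= w b <= 1 by rewrite ltW ?sigmoid_gt0 ?sigmoid_le1.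
have := softmax_le_sub K_gt0 theta neq_ij; have := softmax_gt0 K_gt0 theta i.
move=> pi_gt0 pi_le.
have al_bnd : 0 <= 1 - p j + p i <= 2 * (1 - p j) by lra.
have be_bnd : 0 <= p j - p i <= 1 by lra.
rewrite -{1}(sum_softmax_neq K_gt0) mulr_suml -sumrN.
apply: ler_sum => a neq_aj; rewrite -mulrN -mulrA.
apply: ler_wpM2l; first exact/ltW/softmax_gt0.
apply: mul_gate_mix_ge => //; first exact: adv_ge_N1.
by rewrite lerNl Uw_le.
Qed.

Lemma dg_flow_sub_ge i j (m : R) : 0 < eta -> 0 < m ->
  (forall b, 0 <= r b <= 1) -> (forall b, r b <= r i) -> i != j ->
  1 - p j <= 1 / 2 -> 1 - p j <= expR (- (eta / m)) ->
  p i * U i / 2 - (1 - p j) * (2 * (1 - p j) + m)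
    <= dg_flow eta r theta i - dg_flow eta r theta j.
Proof.
move=> eta_gt0 m_gt0 r01 r_le_ri neq_ij p_conc_half p_conc.
have Ui_ge0 : 0 <= U i.
  apply: le_trans (adv_ge_of_max K_gt0 theta j r_le_ri).
  by rewrite mulr_ge0 ?subr_ge0 ?r_le_ri // ltW ?softmax_gt0.
have half : p i * U i / 2 <= gated_adv i.
  have := dg_gate_ge_half eta_gt0 Ui_ge0.
  have := mulr_ge0 (ltW (softmax_gt0 K_gt0 theta i)) Ui_ge0.
  rewrite /gated_adv; nra.
have Uw_le a : a != j -> - (U a * w a) <= m.
  by move=> neq_aj; apply: adv_mul_gate_ge_concentrated eta_gt0 m_gt0 neq_aj p_conc.
have := dg_mix_sum_ge r01 neq_ij p_conc_half (ltW m_gt0) Uw_le.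
rewrite dg_flow_subE; lra.
Qed.

End DGFlow.

Lemma le_first_of_decreasing (R : numDomainType) (K : nat) (r : 'I_K -> R) (i0 : 'I_K) :
  (forall a b : 'I_K, (a < b)%N -> r b < r a) -> nat_of_ord i0 = 0%N ->
  forall b, r b <= r i0.
Proof.
move=> r_decr i0_eq0 b; case: (posnP b) => [b_eq0 | b_gt0].
  by rewrite (_ : b = i0) //; apply: val_inj; rewrite /= b_eq0 i0_eq0.
by rewrite ltW // r_decr ?i0_eq0.
Qed.

Lemma small_eps_gap (R : realFieldType) (D k eps x : R) :
  0 < D -> 0 < k -> 0 < eps -> eps < 1 / 2 -> eps < D / k / 32 ->
  eps / k * ((1 - eps) * D) <= x ->
  D / (8 * k) * eps <= x / 2 - eps * (2 * eps + D / k / 16).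
Proof.
move=> D_gt0 k_gt0 eps_gt0 eps_lt_half eps_lt_q le_x.
have q_gt0 : 0 < D / k by rewrite divr_gt0.
rewrite (_ : eps / k * _ = eps * (1 - eps) * (D / k)) in le_x; last by field; rewrite gt_eqF.
rewrite (_ : D / (8 * k) = D / k / 8); last by field; rewrite gt_eqF.
move: (D / k) q_gt0 eps_lt_q le_x => q q_gt0 eps_lt_q le_x.
have qeps_le : q * eps <= q / 2 by nra.
have : 0 <= eps * (5 * q / 16 - q * eps / 2 - 2 * eps) by apply: mulr_ge0; lra.
nra.
Qed.

Theorem theorem2 (R : realType) (K : nat) (hK : (2 <= K)%N)
  (r : 'I_K -> R)
  (hr01 : forall a : 'I_K, 0 <= r a <= 1)
  (hrdec : forall a b : 'I_K, (a < b)%N -> r b < r a)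
  (i1 : 'I_K) (hi1 : nat_of_ord i1 = 0%N)
  (j : 'I_K) (hj : (0 < j)%N)
  (eta : R) (heta : 0 < eta) :
  exists eps0 : R, 0 < eps0 /\
    forall theta : 'I_K -> R,
      let eps := 1 - softmax theta j in
      0 < eps -> eps < eps0 ->
      eps / K%:R <= softmax theta i1 ->
      (r i1 - r j) / (8 * K%:R) * eps
        <= dg_flow eta r theta i1 - dg_flow eta r theta j.
Proof.
have K_gt0 : (0 < K)%N by apply: leq_trans hK.
have K_pos : 0 < K%:R :> R by rewrite ltr0n.
set D := r i1 - r j; have D_gt0 : 0 < D by rewrite subr_gt0 hrdec ?hi1.
have m_gt0 : 0 < D / K%:R / 16 by rewrite !divr_gt0.
exists (Num.min (1 / 2) (Num.min (D / K%:R / 32) (expR (- (eta / (D / K%:R / 16)))))).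
split; first by rewrite !lt_min !divr_gt0 ?expR_gt0.
move=> theta eps eps_gt0; rewrite !lt_min => /andP[eps_lt_half /andP[eps_lt_q eps_lt_exp]] p1_ge.
have neq_1j : i1 != j by apply: contraTneq hj => <-; rewrite hi1.
have r_le_r1 := le_first_of_decreasing hrdec hi1.
have pU_ge : eps / K%:R * ((1 - eps) * D) <= softmax theta i1 * adv r theta i1.
  have pj_eq : softmax theta j = 1 - eps by rewrite /eps opprB addrC subrK.
  have := adv_ge_of_max K_gt0 theta j r_le_r1; rewrite -/D pj_eq => le_U.
  apply: ler_pM => //; first by rewrite divr_ge0 ?ltW.
  by rewrite mulr_ge0 ?(ltW D_gt0) //; lra.
apply: le_trans (dg_flow_sub_ge K_gt0 heta m_gt0 hr01 r_le_r1 neq_1j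
  (ltW eps_lt_half) (ltW eps_lt_exp)).
exact: small_eps_gap.
Qed.
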